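(* Let $a>2$ and $f_a(z)=z\big(z^2+(a-2)z+1-2a\big)$. Let $z_0$ be chosen uniformly at random from $[-a,2]$ and $z_{t+1}=f_a(z_t)$. Then $\lim_{t\to\infty}|z_t|=+\infty$ almost surely. *)

From HB Require Import structures.
From mathcomp Require Import all_boot all_order all_algebra.
From mathcomp Require Import all_classical all_reals all_analysis.
Set Implicit Arguments. Unset Strict Implicit. Unset Printing Implicit Defensive.
Import Order.TTheory GRing.Theory Num.Theory.
Import numFieldNormedType.Exports.
Local Open Scope ring_scope.

Definition fa (R : realType) (a : R) (z : R) : R :=
  z * (z ^+ 2 + (a - 2) * z + 1 - 2 * a).

(* a > 2 implies -a < 2, needed to build the uniform law on [-a,2] *)
Lemma neg_lt2 (R : realType) (a : R) : 2 < a -> - a < 2.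
Proof.
move=> h; rewrite ltrNl; apply: lt_trans _ h.
by rewrite (@lt_le_trans _ _ 0) // oppr_lt0 ltr0n.
Qed.

From HB Require Import structures.
From mathcomp Require Import all_boot all_order all_algebra.
From mathcomp Require Import all_classical all_reals all_analysis.
From mathcomp Require Import ring lra zify.
Import Order.TTheory GRing.Theory Num.Theory.
Import numFieldNormedType.Exports.
Local Open Scope classical_set_scope.
Local Open Scope ring_scope.

(* Orbits that leave [-a, 2] escape: outside it, f z - z = z (z + a) (z - 2)
   pushes them away from the interval by a step that only grows.  It remains
   to see that the set of points trapped in [-a, 2] forever is null.  On
   [-a, 2] the map f has three monotone laps, each onto [-a, 2].  In the
   coordinate theta z = asin ((2 z + a - 2) / (a + 2)), whose derivative is
   1 / sqrt ((2 - z) (z + a)), every lap expands by a factor at least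
   lam = sqrt ((a + 16) / 2) > 3.  So the points whose first n iterates stay in
   [-a, 2] lie in 3 ^ n intervals of length O(lam ^ -n), whose total length
   O((3 / lam) ^ n) tends to 0. *)

Lemma within_continuous_comp_within {T U V : topologicalType} (A : set T) (B : set U)
    (f : T -> U) (g : U -> V) :
  {within B, continuous g} -> continuous f -> f @` A `<=` B ->
  {within A, continuous (g \o f)}.
Proof.
move=> gB cf fAB; apply/subspace_continuousP => x Ax.
have := (subspace_continuousP _ _).1 gB (f x) (fAB _ (imageP _ Ax)).
apply: cvg_comp => P /= BP.
have := cf x _ BP; rewrite nbhs_simpl /=.
by apply: filterS => y Py Ay; exact: Py (fAB _ (imageP _ Ay)).
Qed.

Lemma ler_div_sqrt {R : rcfType} (c e p q : R) : 0 <= c -> 0 <= e -> 0 < p -> 0 < q ->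
  c ^+ 2 * q <= e ^+ 2 * p -> c / Num.sqrt p <= e / Num.sqrt q.
Proof.
move=> c0 e0 p0 q0 ceq.
rewrite ler_pdivrMr ?sqrtr_gt0 // mulrAC ler_pdivlMr ?sqrtr_gt0 //.
rewrite -ler_sqr ?nnegrE ?mulr_ge0 ?sqrtr_ge0 //.
by rewrite !exprMn !sqr_sqrtr // ltW.
Qed.

Section real_analysis.
Context {R : realType}.

Lemma derive_le_increment (g h dg dh : R -> R) (l r : R) :
  {within `[l, r], continuous g} -> {within `[l, r], continuous h} ->
  (forall t, l < t < r -> is_derive t 1 g (dg t)) ->
  (forall t, l < t < r -> is_derive t 1 h (dh t)) ->
  (forall t, l < t < r -> dh t <= dg t) ->
  forall x y, l <= x -> x <= y -> y <= r -> h y - h x <= g y - g x.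
Proof.
move=> cg ch Dg Dh dhg x y lx xy yr.
have Dgh t : t \in `]l, r[ -> is_derive t 1 (g - h) (dg t - dh t).
  by rewrite in_itv /= => lt; apply: is_deriveB; [exact: Dg | exact: Dh].
have cgh : {within `[l, r], continuous (g - h)}.
  by move=> z; apply: cvgB; [exact: cg | exact: ch].
have dgh t : t \in `]l, r[ -> derivable (g - h) t 1 by move=> /Dgh [].
have dgh_ge0 t : t \in `]l, r[ -> 0 <= derive1 (g - h) t.
  move=> tlr; rewrite derive1E; have [_ ->] := Dgh t tlr.
  by rewrite subr_ge0; apply: dhg; rewrite in_itv in tlr.
have := ger0_derive1_le_cc dgh dgh_ge0 cgh.
move=> /(_ x y); rewrite !in_itv /= lx yr (le_trans lx xy) (le_trans xy yr).
by move=> /(_ isT isT xy); rewrite !fctE; lra.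
Qed.

Lemma continuous_asin_itv : {within `[-1, 1], continuous (@asin R)}.
Proof.
have := @segment_can_le_continuous R (- (pi / 2)) (pi / 2) sin asin.
rewrite sinN sin_pihalf; apply; first by have := pi_ge0 R; lra.
  exact/continuous_subspaceT/continuous_sin.
exact: sinK.
Qed.

Lemma asin_sub_ge (x y : R) : -1 <= x -> x <= y -> y <= 1 -> y - x <= asin y - asin x.
Proof.
apply: (derive_le_increment asin id (fun t => (Num.sqrt (1 - t ^+ 2))^-1)
    (fun=> 1) _ _ continuous_asin_itv); last first.
- move=> t /andP[t1 t2]; have t21 : t ^+ 2 < 1 by nra.
  rewrite -[leLHS]invr1 lef_pV2 ?posrE ?ltr01 ?sqrtr_gt0 ?subr_gt0 //.
  by rewrite -[leRHS]sqrtr1 ler_sqrt // lerBlDr lerDl sqr_ge0.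
- by apply: continuous_subspaceT => ?; exact: cvg_id.
Qed.

Lemma iter_ge_linear (F : R -> R) (y c : R) : 0 <= c ->
  (forall z, y <= z -> z + c <= F z) -> forall n, y + n%:R * c <= iter n F y.
Proof.
move=> c0 Fc; elim=> [|n IH] /=; first by rewrite mul0r addr0.
apply: le_trans (Fc _ _); last by apply: le_trans IH; rewrite lerDl mulr_ge0.
by rewrite -natr1 mulrDl mul1r addrA lerD2r.
Qed.

Lemma iter_conj_opp (F : R -> R) (y : R) n :
  iter n (fun z => - F (- z)) (- y) = - iter n F y.
Proof. by elim: n => //= n ->; rewrite opprK. Qed.

Lemma cvgry_linear_lb (u : nat -> R) (c b : R) : 0 < c ->
  (forall n, n%:R * c - b <= u n) -> u @ \oo --> +oo.
Proof.
move=> c0 ub; apply/cvgryPge => A.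
near=> n; apply: le_trans (ub n); rewrite lerBrDr -ler_pdivrMr //.
by near: n; exact: nbhs_infty_ger.
Unshelve. all: by end_near. Qed.

End real_analysis.

Lemma measure_bigcap_geometric {d} {T : measurableType d} {R : realType}
    (mu : {measure set T -> \bar R}) (A : (set T)^nat) (K r : R) :
  (forall n, measurable (A n)) -> (forall n, (mu (A n) <= (K * r ^+ n)%:E)%E) ->
  `|r| < 1 -> mu (\bigcap_n A n) = 0%E.
Proof.
move=> mA muA r1; set m := mu _.
have bnd n : (m <= (K * r ^+ n)%:E)%E.
  apply: le_trans (muA n); apply: le_measure; rewrite ?inE //.
  - exact: bigcapT_measurable.
  - by move=> x; apply.
have m_fin : m \is a fin_num.
  rewrite ge0_fin_numE ?measure_ge0 //; apply: le_lt_trans (bnd 0%N) _.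
  exact: ltey.
have : fine m <= 0.
  have cv := cvg_geometric K r1.
  rewrite -(cvg_lim (@Rhausdorff R) cv); apply: limr_ge; first exact: cvgP cv.
  by near=> n; rewrite /geometric /= -lee_fin fineK.
rewrite -lee_fin fineK // => m0; apply/eqP; rewrite eq_le m0 measure_ge0.
Unshelve. all: by end_near. Qed.

Lemma lebesgue_measure_bigsetU_itv {R : realType} (m : nat) (c : nat -> R) (e : R) :
  0 <= e ->
  (lebesgue_measure (\big[setU/set0]_(k < m) `[(c k - e)%R, (c k + e)%R]%classic)
    <= (m%:R * (2 * e))%:E)%E.
Proof.
move=> e0.
set F := fun k => `[(c k - e)%R, (c k + e)%R]%classic.
have := @Boole_inequality _ _ _ (@lebesgue_measure R) F m.
move=> /(_ (fun k _ => measurable_itv _)) /le_trans; apply.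
rewrite (eq_bigr (fun=> (2 * e)%:E)) => [|k _].
  by rewrite sumEFin sumr_const card_ord (mulr_natl (2 * e)).
apply: eq_trans (lebesgue_measure_itv _) _.
rewrite /= lte_fin; case: ifPn => [_|]; first by rewrite -EFinD; congr (_%:E); ring.
rewrite -leNgt => ce; have -> : e = 0 by lra.
by rewrite mulr0.
Qed.

Section cubic_map.
Context {R : realType} (a : R).
Local Notation f := (fa a).

Definition dfa (t : R) : R := (t - 1) * (3 * t + 2 * a - 1).
Definition qa (t : R) : R := t ^+ 2 + a * t + 1.
Definition bdist (z : R) : R := (2 - z) * (z + a).

Lemma fa_addr t : f t + a = (t - 1) ^+ 2 * (t + a).
Proof. by rewrite /fa; ring. Qed.

Lemma subr_fa t : 2 - f t = (2 - t) * qa t.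
Proof. by rewrite /fa /qa; ring. Qed.

Lemma fa_subr t : f t - t = t * (t + a) * (t - 2).
Proof. by rewrite /fa; ring. Qed.

Lemma bdist_fa t : bdist (f t) = bdist t * qa t * (t - 1) ^+ 2.
Proof. by rewrite /bdist subr_fa fa_addr; ring. Qed.

Lemma is_derive_fa (t : R) : is_derive t 1 f (dfa t).
Proof.
pose p : {poly R} := 'X^3 + (a - 2) *: 'X^2 + (1 - 2 * a) *: 'X.
have -> : f = horner p.
  by apply/funext => z; rewrite /fa /p !(hornerD, hornerZ, hornerXn, hornerX); ring.
apply: is_derive_eq; rewrite /p !(derivD, derivZ, derivXn, derivX).
by rewrite !(hornerD, hornerZ, hornerMn, hornerXn, hornerC) /dfa /=; ring.
Qed.

Lemma continuous_fa : continuous f.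
Proof.
move=> z; apply/differentiable_continuous/derivable1_diffP.
by have [] := is_derive_fa z.
Qed.

End cubic_map.

Section dynamics.
Context {R : realType} (a : R) (ha : 2 < a).
Set Implicit Arguments.
Unset Strict Implicit.
Local Notation f := (fa a).
Local Notation dfa := (dfa a).
Local Notation qa := (qa a).
Local Notation bdist := (bdist a).

Definition q1 : R := (- a - Num.sqrt (a ^+ 2 - 4)) / 2.
Definition q2 : R := (- a + Num.sqrt (a ^+ 2 - 4)) / 2.

Lemma qa_factor t : qa t = (t - q1) * (t - q2).
Proof.
have d2 : Num.sqrt (a ^+ 2 - 4) ^+ 2 = a ^+ 2 - 4 by rewrite sqr_sqrtr //; have := ha; nra.
by rewrite /qa /q1 /q2; nra.
Qed.

Lemma q1_q2_bounds :
  [/\ - a < q1, q1 < q2, q2 < 0, 3 * q1 + 2 * a - 1 <= 0 & 0 < 3 * q2 + 2 * a - 1].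
Proof.
have a2 := ha; set d := Num.sqrt (a ^+ 2 - 4).
have d2 : d ^+ 2 = a ^+ 2 - 4 by rewrite sqr_sqrtr //; nra.
have d0 : 0 < d by rewrite sqrtr_gt0; nra.
rewrite /q1 /q2 -/d; split; nra.
Qed.

(* The laps of f on [-a, 2] are [-a, q1], [q2, 1] and [1, 2], where q1 < q2
   are the roots of qa; f is monotone on lap i, with orientation [orient i]. *)
Definition branch_lo (i : nat) : R := if i == 0%N then - a else if i == 1%N then q2 else 1.
Definition branch_hi (i : nat) : R := if i == 0%N then q1 else if i == 1%N then 1 else 2.
Definition orient (i : nat) : R := if i == 1%N then -1 else 1.

Lemma branch_range i t : branch_lo i <= t <= branch_hi i ->
  -a <= t <= 2 /\ -a <= f t <= 2.
Proof.
have a2 := ha; have [q1a q12 q20 _ _] := q1_q2_bounds.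
rewrite /branch_lo /branch_hi => /andP[t1 t2].
have q0 : 0 <= qa t by rewrite qa_factor; case: i t1 t2 => [|[|i]] /= t1 t2; nra.
have /andP[ta t2'] : -a <= t <= 2.
  by apply/andP; case: i t1 t2 => [|[|i]] /= t1 t2; split; lra.
split; first by apply/andP.
have : 0 <= (t - 1) ^+ 2 * (t + a) by rewrite mulr_ge0 ?sqr_ge0 // -lerBlDr sub0r.
have : 0 <= (2 - t) * qa t by rewrite mulr_ge0 ?subr_ge0.
by rewrite -fa_addr -subr_fa => ? ?; apply/andP; split; lra.
Qed.

Lemma branch_interior i t : branch_lo i < t < branch_hi i ->
  -a < t < 2 /\ -a < f t < 2.
Proof.
have a2 := ha; have [q1a q12 q20 _ _] := q1_q2_bounds.
rewrite /branch_lo /branch_hi => /andP[t1 t2].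
have q0 : 0 < qa t by rewrite qa_factor; case: i t1 t2 => [|[|i]] /= t1 t2; nra.
have t1ne : 0 < (t - 1) ^+ 2 by case: i t1 t2 => [|[|i]] /= t1 t2; nra.
have /andP[ta t2'] : -a < t < 2.
  by apply/andP; case: i t1 t2 => [|[|i]] /= t1 t2; split; lra.
split; first by apply/andP.
have : 0 < (t - 1) ^+ 2 * (t + a) by rewrite mulr_gt0 // -ltrBlDr sub0r.
have : 0 < (2 - t) * qa t by rewrite mulr_gt0 ?subr_gt0.
by rewrite -fa_addr -subr_fa => ? ?; apply/andP; split; lra.
Qed.

Lemma orient_dfa i t : branch_lo i <= t <= branch_hi i -> orient i * dfa t = `|dfa t|.
Proof.
have a2 := ha; have [q1a q12 q20 q1s q2s] := q1_q2_bounds.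
rewrite /branch_lo /branch_hi /orient /dfa; case: i => [|[|i]] /= /andP[t1 t2].
- by rewrite mul1r ger0_norm //; nra.
- by rewrite mulN1r ler0_norm //; nra.
- by rewrite mul1r ger0_norm //; nra.
Qed.

Lemma branch_cover t : -a <= t <= 2 -> -a <= f t <= 2 ->
  exists2 i, (i < 3)%N & branch_lo i <= t <= branch_hi i.
Proof.
have a2 := ha; have [q1a q12 q20 _ _] := q1_q2_bounds.
rewrite /branch_lo /branch_hi => /andP[t1 t2] /andP[_ ft2].
have [tq1|q1t] := lerP t q1; first by exists 0%N => //; apply/andP.
have [tq2|q2t] := ltrP t q2.
  have t2q : 0 < 2 - t by lra.
  have : qa t < 0 by rewrite qa_factor; nra.
  by rewrite -(pmulr_rlt0 _ t2q) -subr_fa; lra.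
have [t1'|t1'] := lerP t 1; first by exists 1%N => //; apply/andP.
by exists 2%N => //=; apply/andP; split; lra.
Qed.

Definition chart (z : R) : R := (2 * z + a - 2) / (a + 2).
Definition theta (z : R) : R := asin (chart z).

Lemma chart_range z : -a <= z <= 2 -> -1 <= chart z <= 1.
Proof.
have a2 := ha; move=> /andP[z1 z2].
by rewrite /chart ler_pdivlMr ?ler_pdivrMr; try lra; apply/andP; split; lra.
Qed.

Lemma chart_range_open z : -a < z < 2 -> -1 < chart z < 1.
Proof.
have a2 := ha; move=> /andP[z1 z2].
by rewrite /chart ltr_pdivlMr ?ltr_pdivrMr; try lra; apply/andP; split; lra.
Qed.

Lemma chart_sub x y : chart y - chart x = 2 / (a + 2) * (y - x).
Proof. by have a2 := ha; rewrite /chart; field; lra. Qed.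

Lemma chart_affine : chart = cst (2 / (a + 2)) * id + cst ((a - 2) / (a + 2)).
Proof. by have a2 := ha; apply/funext => t; rewrite /chart !fctE /=; field; lra. Qed.

Lemma continuous_chart : continuous chart.
Proof.
by move=> x; rewrite chart_affine; apply: cvgD; [apply: cvgM|];
  [exact: cvg_cst | exact: cvg_id | exact: cvg_cst].
Qed.

Lemma is_derive_theta z : -a < z < 2 -> is_derive z 1 theta (Num.sqrt (bdist z))^-1.
Proof.
have a2 := ha; move=> zI.
have dchart : is_derive z 1 chart (2 / (a + 2)).
  by rewrite chart_affine; apply: is_derive_eq; rewrite !fctE /= /GRing.scale /=; ring.
have -> : theta = asin \o chart by [].
apply: is_derive_eq (is_derive1_comp (is_derive1_asin (chart_range_open zI)) dchart) _.
have -> : 1 - chart z ^+ 2 = (2 / (a + 2)) ^+ 2 * bdist z.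
  by rewrite /chart /bdist; field; lra.
have bz : 0 < bdist z by case/andP: zI => z1 z2; rewrite /bdist mulr_gt0 //; lra.
rewrite sqrtrM ?sqr_ge0 // sqrtr_sqr ger0_norm ?divr_ge0 //; try lra.
by field; rewrite gt_eqF ?sqrtr_gt0 //; lra.
Qed.

Lemma continuous_theta_comp (A : set R) (g : R -> R) : continuous g ->
  (forall x, A x -> -a <= g x <= 2) -> {within A, continuous (theta \o g)}.
Proof.
move=> cg gA; have -> : theta \o g = asin \o (chart \o g) by [].
apply: within_continuous_comp_within continuous_asin_itv _ _.
  by move=> x; apply: continuous_comp; [exact: cg | exact: continuous_chart].
by move=> _ [x Ax <-]; rewrite /= in_itv /=; apply: chart_range; exact: gA.
Qed.

Lemma theta_dist_le x y : -a <= x <= 2 -> -a <= y <= 2 -> `|theta x - theta y| <= pi.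
Proof.
move=> /chart_range x1 /chart_range y1; rewrite /theta.
have := asin_geNpi2 x1; have := asin_lepi2 x1.
have := asin_geNpi2 y1; have := asin_lepi2 y1.
by move=> ? ? ? ?; rewrite ler_norml; apply/andP; split; lra.
Qed.

Lemma theta_sub_ge x y : -a <= x -> x <= y -> y <= 2 ->
  2 / (a + 2) * (y - x) <= theta y - theta x.
Proof.
have a2 := ha; move=> x1 xy y2; rewrite -chart_sub.
have /chart_range/andP[cx _] : -a <= x <= 2 by apply/andP; split; lra.
have /chart_range/andP[_ cy] : -a <= y <= 2 by apply/andP; split; lra.
apply: asin_sub_ge => //; rewrite -subr_ge0 chart_sub mulr_ge0 ?divr_ge0 ?subr_ge0 //; lra.
Qed.

Lemma theta_dist_ge x y : -a <= x <= 2 -> -a <= y <= 2 ->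
  2 / (a + 2) * `|x - y| <= `|theta x - theta y|.
Proof.
wlog xy : x y / x <= y => [hwlog|/andP[x1 _] /andP[_ y2]].
  by case: (leP x y) => [|/ltW] /hwlog H xI yI; [|rewrite distrC (distrC (theta x))]; exact: H.
have := theta_sub_ge x1 xy y2.
rewrite distrC (distrC (theta x)) ger0_norm ?subr_ge0 // => H.
by apply: le_trans H (ler_norm _).
Qed.

Definition lam : R := Num.sqrt ((a + 16) / 2).

Lemma lam_gt3 : 3 < lam.
Proof. by have a2 := ha; rewrite -ltr_sqr ?nnegrE ?sqrtr_ge0 // sqr_sqrtr; lra. Qed.

Lemma expansion_poly t : -a <= t <= 2 -> lam ^+ 2 * qa t <= (3 * t + 2 * a - 1) ^+ 2.
Proof.
have a2 := ha; move=> /andP[t1 t2].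
rewrite sqr_sqrtr; last lra.
have : (t + a) * (t - 2) <= 0 by nra.
rewrite /qa; nra.
Qed.

Lemma expansion_rate t : -a < t < 2 -> -a < f t < 2 ->
  lam / Num.sqrt (bdist t) <= `|dfa t| / Num.sqrt (bdist (f t)).
Proof.
have a2 := ha; move=> /andP[t1 t2] /andP[ft1 ft2].
have b0 : 0 < bdist t by rewrite mulr_gt0 //; lra.
apply: ler_div_sqrt => //; first by rewrite ltW // (lt_trans _ lam_gt3).
  by rewrite mulr_gt0 //; lra.
rewrite bdist_fa real_normK ?num_real // /dfa.
have tI : -a <= t <= 2 by apply/andP; split; lra.
move: (expansion_poly tI) => /(ler_wpM2r (mulr_ge0 (ltW b0) (sqr_ge0 (t - 1)))).
by move=> H; lra.
Qed.

Lemma theta_expand i x y : branch_lo i <= x -> x <= y -> y <= branch_hi i ->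
  lam * (theta y - theta x) <= orient i * (theta (f y) - theta (f x)).
Proof.
move=> lx xy yh; rewrite !mulrBr.
have on_branch z : `[branch_lo i, branch_hi i]%classic z -> -a <= z <= 2 /\ -a <= f z <= 2.
  by rewrite /= in_itv /=; exact: branch_range.
apply: (derive_le_increment (fun t => orient i * theta (f t)) (fun t => lam * theta t)
  (fun t => orient i * ((Num.sqrt (bdist (f t)))^-1 * dfa t))
  (fun t => lam * (Num.sqrt (bdist t))^-1) (branch_lo i) (branch_hi i)) => //.
- move=> z; apply: cvgM; first exact: cvg_cst.
  have : {within `[branch_lo i, branch_hi i], continuous (theta \o f)}.
    by apply: continuous_theta_comp (continuous_fa a) _ => t /on_branch[].
  by move=> /(_ z).
- move=> z; apply: cvgM; first exact: cvg_cst.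
  have : {within `[branch_lo i, branch_hi i], continuous (theta \o id)}.
    by apply: continuous_theta_comp => [t|t /on_branch[]//]; exact: cvg_id.
  by move=> /(_ z).
- move=> t /branch_interior[_ ft]; apply: is_deriveZ.
  exact: is_derive1_comp (is_derive_theta ft) (is_derive_fa a t).
- by move=> t /branch_interior[tI _]; apply: is_deriveZ; exact: is_derive_theta.
move=> t t_lap; have [t_in ft_in] := branch_interior t_lap.
have t_lap' : branch_lo i <= t <= branch_hi i by case/andP: t_lap => t1 t2; rewrite !ltW.
by rewrite mulrCA orient_dfa // [leRHS]mulrC; exact: expansion_rate.
Qed.

Lemma theta_expand_norm i x y :
  branch_lo i <= x <= branch_hi i -> branch_lo i <= y <= branch_hi i ->
  lam * `|theta x - theta y| <= `|theta (f x) - theta (f y)|.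
Proof.
wlog xy : x y / x <= y => [hwlog|xI yI].
  case: (leP x y) => [|/ltW] /hwlog H xI yI; first exact: H.
  by rewrite distrC (distrC (theta (f x))); exact: H.
have a2 := ha; have [/andP[x1 _] _] := branch_range xI.
have [/andP[_ y2] _] := branch_range yI.
have thxy : 0 <= theta y - theta x.
  apply: le_trans (theta_sub_ge x1 xy y2).
  by rewrite mulr_ge0 ?divr_ge0 ?subr_ge0 //; lra.
rewrite distrC ger0_norm // distrC.
case/andP: xI => lx _; case/andP: yI => _ yh.
apply: le_trans (theta_expand lx xy yh) _.
apply: le_trans (ler_norm _) _.
by rewrite normrM /orient; case: ifP => _; rewrite ?normrN normr1 mul1r.
Qed.

(* The base-3 digits of [k], least significant first, are the branches
   visited by x, f x, ..., f^(n-1) x. *)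
Fixpoint cylinder (n k : nat) (x : R) : Prop :=
  if n is n'.+1 then
    branch_lo (k %% 3) <= x <= branch_hi (k %% 3) /\ cylinder n' (k %/ 3) (f x)
  else -a <= x <= 2.

Lemma cylinder_range n k x : cylinder n k x -> -a <= x <= 2.
Proof. by case: n => [//|n] [/branch_range[]]. Qed.

Lemma cylinder_theta_dist n k x y : cylinder n k x -> cylinder n k y ->
  lam ^+ n * `|theta x - theta y| <= pi.
Proof.
elim: n k x y => [|n IH] k x y /= => [xI yI|[xI cx] [yI cy]].
  by rewrite expr0 mul1r; exact: theta_dist_le.
apply: le_trans (IH _ _ _ cx cy); rewrite exprSr -mulrA; apply: ler_wpM2l.
  by rewrite exprn_ge0 // ltW // (lt_trans _ lam_gt3).
exact: theta_expand_norm xI yI.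
Qed.

Definition cylinder_radius (n : nat) : R := (a + 2) / 2 * (pi / lam ^+ n).

Lemma cylinder_dist n k x y : cylinder n k x -> cylinder n k y ->
  `|x - y| <= cylinder_radius n.
Proof.
move=> cx cy; have a2 := ha.
have ln : 0 < lam ^+ n by rewrite exprn_gt0 // (lt_trans _ lam_gt3).
have := theta_dist_ge (cylinder_range cx) (cylinder_range cy).
have := cylinder_theta_dist cx cy; rewrite mulrC -ler_pdivlMr // => th xy.
have e : `|x - y| = (a + 2) / 2 * (2 / (a + 2) * `|x - y|) by field; lra.
rewrite e /cylinder_radius; apply: ler_wpM2l; first lra.
exact: le_trans xy th.
Qed.

Definition trapped : set R := [set x | forall t, -a <= iter t f x <= 2].

Lemma cylinder_cover n x : trapped x -> exists2 k, (k < 3 ^ n)%N & cylinder n k x.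
Proof.
elim: n x => [|n IH] x xt; first by exists 0%N => //; exact: (xt 0%N).
have /IH[k kn cfx] : trapped (f x) by move=> t; rewrite -iterSr; exact: xt.
have [i i3 xi] := branch_cover (xt 0%N) (xt 1%N).
exists (k * 3 + i)%N; first by rewrite expnSr; lia.
by rewrite /= modnMDl divnMDl // modn_small // divn_small // addn0.
Qed.

Lemma trapped_negligible : lebesgue_measure.-negligible trapped.
Proof.
have a2 := ha; have l3 := lam_gt3.
(* [c n k] is a point of the cylinder if it is nonempty, and 0 otherwise. *)
pose c n k := xget 0 (cylinder n k).
pose I n k := `[(c n k - cylinder_radius n)%R, (c n k + cylinder_radius n)%R]%classic.
pose C n := \big[setU/set0]_(k < 3 ^ n) I n k.
have r0 n : 0 <= cylinder_radius n.
  by rewrite mulr_ge0 ?divr_ge0 ?pi_ge0 ?exprn_ge0 //; lra.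
exists (\bigcap_n C n); split.
- by apply: bigcapT_measurable => n; apply: bigsetU_measurable => k _; exact: measurable_itv.
- apply: (measure_bigcap_geometric _ _ ((a + 2) * pi) (3 / lam)) => [n|n|].
  + by apply: bigsetU_measurable => k _; exact: measurable_itv.
  + move: (lebesgue_measure_bigsetU_itv (3 ^ n) (c n) _ (r0 n)) => /le_trans; apply.
    suff -> : (3 ^ n)%:R * (2 * cylinder_radius n) = (a + 2) * pi * (3 / lam) ^+ n by [].
    rewrite /cylinder_radius natrX exprMn exprVn; field.
    by rewrite expf_neq0 // gt_eqF //; lra.
  + by rewrite ger0_norm ?divr_ge0 ?ltr_pdivrMr ?mul1r //; lra.
- move=> x tx n _; have [k kn cx] := cylinder_cover n tx.
  rewrite /C -(bigcup_mkord _ (I n)); exists k => //.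
  have /(cylinder_dist cx) : cylinder n k (c n k) by apply: xgetPex; exists x.
  by rewrite /I /= in_itv /= ler_distl.
Qed.

Lemma fa_escape y : ~ (-a <= y <= 2) ->
  exists2 c, 0 < c & forall n, n%:R * c - `|y| <= `|iter n f y|.
Proof.
have a2 := ha; move=> yout.
have [y2|y2] := ltrP 2 y.
  exists (y * (y + a) * (y - 2)); first by rewrite !mulr_gt0 //; lra.
  move=> n; have : y + n%:R * (y * (y + a) * (y - 2)) <= iter n f y.
    apply: iter_ge_linear => [|z yz]; first by rewrite !mulr_ge0 //; lra.
    rewrite -lerBrDl fa_subr; apply: ler_pM; try lra.
      by rewrite mulr_ge0 //; lra.
    by apply: ler_pM; lra.
  by have := ler_norm y; have := ler_norm (iter n f y); lra.
have ya : y < -a by rewrite ltNge; apply: contra_notN yout => ya; apply/andP.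
exists (- y * (- y - a) * (2 - y)); first by rewrite !mulr_gt0 //; lra.
move=> n; have : - y + n%:R * (- y * (- y - a) * (2 - y)) <= - iter n f y.
  rewrite -iter_conj_opp; apply: iter_ge_linear => [|z yz].
    by rewrite !mulr_ge0 //; lra.
  have -> : - f (- z) = z + z * (z - a) * (z + 2) by rewrite /fa; ring.
  rewrite lerD2l; apply: ler_pM; try lra.
    by rewrite mulr_ge0 //; lra.
  by apply: ler_pM; lra.
by have := ler_norm (- y); have := ler_norm (- iter n f y); rewrite !normrN; lra.
Qed.

Lemma escape_diverges x t0 : ~ (-a <= iter t0 f x <= 2) ->
  (fun t => `|iter t f x|) @ \oo --> +oo.
Proof.
move=> /fa_escape[c c0 lb]; rewrite -(cvg_shiftn t0) /=.
by apply: (cvgry_linear_lb _ _ `|iter t0 f x| c0) => n; rewrite iterD; exact: lb.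
Qed.

End dynamics.

Theorem lemma3 (R : realType) (a : R) (ha : 2 < a) :
  {ae uniform_prob (neg_lt2 ha), forall z0 : R,
     (fun t : nat => `| iter t (fa a) z0 |) @ \oo --> +oo}.
Proof.
have [N [mN N0 trappedN]] := trapped_negligible ha.
exists N; split => //.
  exact: (null_content_dominatesP _ _).1 (dominates_uniform_prob _) N mN N0.
move=> z /= z_ndiv; apply: trappedN => t.
by apply: contrapT => /(escape_diverges ha); exact: z_ndiv.
Qed.
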